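(* Let $\Gamma=(\mathcal{G},\mathcal{I},\boldsymbol{c})$ be a nonatomic routing game with BPR-type cost functions, i.e., there is $\beta\in\mathbb{R}_+$ such that $c_e(x)=t_e+a_ex^{\beta}$ with $t_e,a_e\in\mathbb{R}_+$ for every edge $e$, and suppose $\mathcal{G}$ is a directed acyclic multigraph. Then there exists a non-negative demand-independent optimal toll (DIOT) $\boldsymbol{\tau}\in\mathbb{R}_+^{\mathcal{E}}$ for $\Gamma$.
   Context: A nonatomic routing game $\Gamma=(\mathcal{G},\mathcal{I},\boldsymbol{c})$ consists of a finite directed multigraph $\mathcal{G}=(\mathcal{V},\mathcal{E})$, a finite set $\mathcal{I}$ of origin-destination pairs $i$ with origin $o^i$ and destination $d^i$, and nondecreasing continuous cost functions $c_e:\mathbb{R}_+\to\mathbb{R}_+$. $\mathcal{P}^i$ is the set of simple $o^i$–$d^i$ paths. For a demand vector $\boldsymbol{\mu}\in\mathbb{R}_+^{\mathcal{I}}$, feasible flows are $\boldsymbol{f}\in\mathbb{R}_+^{\mathcal{P}}$ with $\sum_{p\in\mathcal{P}^i}f_p=\mu^i$; loads $x_e=\sum_{p\ni e}f_p$; path costs $c_p=\sum_{e\in p}c_e(x_e)$. A Wardrop equilibrium is a feasible flow where every used path of each pair $i$ has cost at most that of any other path in $\mathcal{P}^i$. The total cost is $L(\boldsymbol{f})=\sum_p f_pc_p(\boldsymbol{f})$; a system optimum minimizes $L$ over feasible flows. For a toll vector $\boldsymbol{\tau}\in\mathbb{R}^{\mathcal{E}}$, $\Gamma^{\boldsymbol{\tau}}$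 has edge costs $c_e(x)+\tau_e$. $\boldsymbol{\tau}$ is a DIOT for $\Gamma$ if for every demand vector $\boldsymbol{\mu}\in\mathbb{R}_+^{\mathcal{I}}$ every Wardrop equilibrium of $\Gamma^{\boldsymbol{\tau}}$ with demand $\boldsymbol{\mu}$ is a system optimum of $\Gamma$ for demand $\boldsymbol{\mu}$. *)

From HB Require Import structures.
From mathcomp Require Import all_boot all_order all_algebra.
From mathcomp Require Import reals exp.
Set Implicit Arguments. Unset Strict Implicit. Unset Printing Implicit Defensive.
Import Order.TTheory GRing.Theory Num.Theory.
Local Open Scope ring_scope.

Section Routing.
Variables (R : realType) (V E I : finType).
Variables (src tgt : E -> V) (orig dest : I -> V).

Fixpoint is_walk (o : V) (p : seq E) (d : V) : bool :=
  match p with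
  | [::] => o == d
  | e :: p' => (src e == o) && is_walk (tgt e) p' d
  end.

Definition is_simple_path (o : V) (p : seq E) (d : V) : bool :=
  is_walk o p d && uniq (o :: map tgt p).

Definition acyclic : Prop := forall (v : V) (p : seq E), is_walk v p v -> p = [::].

Fixpoint allseqs (n : nat) : seq (seq E) :=
  match n with
  | 0 => [:: [::]]
  | n'.+1 => [::] :: [seq e :: s | e <- enum E, s <- allseqs n']
  end.

(* P^i : duplicate-free enumeration of the simple orig i - dest i paths
   (a simple path has pairwise distinct edges, hence length <= #|E|) *)
Definition paths (i : I) : seq (seq E) :=
  undup [seq p <- allseqs #|E| | is_simple_path (orig i) p (dest i)].

Definition flow := I -> seq E -> R.

Definition load (f : flow) (e : E) : R :=
  \sum_(i : I) \sum_(p <- paths i) f i p * (e \in p)%:R.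

Definition path_cost (c : E -> R -> R) (f : flow) (p : seq E) : R :=
  \sum_(e <- p) c e (load f e).

Definition feasible (mu : I -> R) (f : flow) : Prop :=
  (forall i p, p \in paths i -> 0 <= f i p) /\
  (forall i, \sum_(p <- paths i) f i p = mu i).

Definition wardrop (c : E -> R -> R) (mu : I -> R) (f : flow) : Prop :=
  feasible mu f /\
  forall i p q, p \in paths i -> q \in paths i -> 0 < f i p ->
    path_cost c f p <= path_cost c f q.

Definition total_cost (c : E -> R -> R) (f : flow) : R :=
  \sum_(i : I) \sum_(p <- paths i) f i p * path_cost c f p.

Definition system_optimum (c : E -> R -> R) (mu : I -> R) (f : flow) : Prop :=
  feasible mu f /\ forall g, feasible mu g -> total_cost c f <= total_cost c g.

Definition tolled (c : E -> R -> R) (tau : E -> R) : E -> R -> R :=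
  fun e x => c e x + tau e.

Definition is_DIOT (c : E -> R -> R) (tau : E -> R) : Prop :=
  forall mu : I -> R, (forall i, 0 <= mu i) ->
  forall f : flow, wardrop (tolled c tau) mu f -> system_optimum c mu f.

End Routing.

(* BPR-type cost c_e(x) = t_e + a_e x^beta  (powR 0 0 = 1) *)
Definition bpr {R : realType} {E : Type} (t a : E -> R) (beta : R) : E -> R -> R :=
  fun e x => t e + a e * powR x beta.

From Pilot Require Import Defs.
From HB Require Import structures.
From mathcomp Require Import all_boot all_order all_algebra.
From mathcomp Require Import reals exp.
From mathcomp Require Import boolp ring lra.
Import Order.TTheory GRing.Theory Num.Theory.
Local Open Scope ring_scope.

(* With K = 1 + beta, the map x |-> x c_e(x) is convex with derivative
   mc_e(x) = t_e + K a_e x^beta, so a flow is a system optimum as soon as it is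
   a Wardrop equilibrium for the marginal costs mc_e.  Now
   c_e(x) + tau_e = mc_e(x) / K + (pi (tgt e) - pi (src e)) for
   tau_e = pi (tgt e) - pi (src e) - (t_e - t_e / K), whatever the potential
   pi on vertices: the potential telescopes along each o-d path, so tolled
   equilibria are marginal-cost equilibria for every demand.  Acyclicity gives
   a potential increasing by at least t_e - t_e / K along every edge e
   (a multiple of the number of ancestors of a vertex), making tau nonnegative. *)

Section PowerInequalities.
Local Set Implicit Arguments.
Local Unset Strict Implicit.
Variable R : realType.

Lemma tangent_le_mul_powR (beta x y : R) :
  0 <= beta -> 0 <= x -> 0 <= y ->
  (1 + beta) * x `^ beta * (y - x) <= y * y `^ beta - x * x `^ beta.
Proof.
move=> beta_ge0 x_ge0 y_ge0.
have [->|beta_neq0] := eqVneq beta 0.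
  by rewrite !powRr0 addr0 !mulr1 mul1r.
have beta_gt0 : 0 < beta by rewrite lt_def beta_neq0 beta_ge0.
have K_gt0 : 0 < 1 + beta by lra.
have K_neq0 : 1 + beta != 0 by rewrite gt_eqF.
have mul_powR z : 0 <= z -> z * z `^ beta = z `^ (1 + beta).
  by move=> z_ge0; rewrite -(mulr_powRB1 z_ge0 K_gt0); congr (_ * _ `^ _); ring.
have conj_gt0 : 0 < (1 + beta) / beta by apply: divr_gt0.
have conj_sum : (1 + beta)^-1 + ((1 + beta) / beta)^-1 = 1.
  by rewrite invf_div; field; rewrite ?beta_neq0 ?K_neq0.
(* Young's inequality with exponents 1 + beta and (1 + beta) / beta *)
have := conjugate_powR y_ge0 (powR_ge0 x beta) K_gt0 conj_gt0 conj_sum.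
rewrite -powRrM (_ : beta * _ = 1 + beta); last by field; rewrite ?beta_neq0 ?K_neq0.
rewrite -!mul_powR // -(ler_pM2l K_gt0).
rewrite (_ : (1 + beta) * (_ / _ + _ / _) =
  y * y `^ beta + beta * (x * x `^ beta)); last by field; rewrite ?beta_neq0 ?K_neq0.
nra.
Qed.

Lemma bpr_tangent (E : Type) (t a : E -> R) (beta : R) e x y :
  0 <= beta -> 0 <= t e -> 0 <= a e -> 0 <= x -> 0 <= y ->
  x * bpr t a beta e x + (y - x) * (t e + (1 + beta) * a e * x `^ beta)
    <= y * bpr t a beta e y.
Proof.
move=> beta_ge0 t_ge0 a_ge0 x_ge0 y_ge0.
have := tangent_le_mul_powR beta_ge0 x_ge0 y_ge0; rewrite /bpr; nra.
Qed.

End PowerInequalities.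

Section MinSupport.
Local Set Implicit Arguments.
Local Unset Strict Implicit.
Variables (R : realDomainType) (T : eqType).

Lemma sum_le_of_min_support (r : seq T) (f g cost : T -> R) (m : R) :
  (forall p, p \in r -> 0 <= f p) -> (forall p, p \in r -> 0 <= g p) ->
  \sum_(p <- r) f p = m -> \sum_(p <- r) g p = m ->
  (forall p q, p \in r -> q \in r -> 0 < f p -> cost p <= cost q) ->
  \sum_(p <- r) f p * cost p <= \sum_(p <- r) g p * cost p.
Proof.
move=> f_ge0 g_ge0 f_sum g_sum f_min.
have [m0|m_neq0] := eqVneq m 0.
  have vanish h : (forall p, p \in r -> 0 <= h p) -> \sum_(p <- r) h p = m ->
      \sum_(p <- r) h p * cost p = 0.
    move=> h_ge0; rewrite m0 big_seq => /eqP; rewrite psumr_eq0 // => /allP h0.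
    rewrite big_seq big1 // => p p_in.
    by have /implyP/(_ p_in)/eqP -> := h0 p p_in; rewrite mul0r.
  by rewrite (vanish f) ?(vanish g).
have m_gt0 : 0 < m.
  by rewrite lt_def m_neq0 -f_sum big_seq sumr_ge0.
(* compare both sides after weighting by the mass of the other distribution *)
rewrite -(ler_pM2l m_gt0) -{1}g_sum -{1}f_sum !mulr_suml.
under eq_bigr => q _ do rewrite mulr_sumr.
rewrite exchange_big /= big_seq [leRHS]big_seq; apply: ler_sum => p p_in.
rewrite mulr_sumr big_seq [leRHS]big_seq; apply: ler_sum => q q_in.
have [f0|f_neq0] := eqVneq (f p) 0; first by rewrite f0 !(mul0r, mulr0).
have f_gt0 : 0 < f p by rewrite lt_def f_neq0 f_ge0.
rewrite mulrCA; apply: ler_wpM2l; first exact: ltW.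
by apply: ler_wpM2l; [exact: g_ge0 | exact: f_min].
Qed.

End MinSupport.

Section RoutingGame.
Local Set Implicit Arguments.
Local Unset Strict Implicit.
Variables (R : realType) (V E I : finType).
Variables (src tgt : E -> V) (orig dest : I -> V).

Local Notation is_walk := (is_walk src tgt).
Local Notation paths := (paths src tgt orig dest).
Local Notation load := (load src tgt orig dest).
Local Notation path_cost := (path_cost src tgt orig dest).
Local Notation total_cost := (total_cost src tgt orig dest).
Local Notation feasible := (feasible src tgt orig dest).
Local Notation wardrop := (wardrop src tgt orig dest).
Local Notation system_optimum := (system_optimum src tgt orig dest).

Lemma is_walk_cat u p v q w : is_walk u p v -> is_walk v q w -> is_walk u (p ++ q) w.
Proof.
elim: p u => [|e p IHp] u /=; first by move/eqP->.
by case/andP=> -> /IHp walk_pq /walk_pq ->.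
Qed.

Lemma big_walk_telescope (pi : V -> R) o p d : is_walk o p d ->
  \sum_(e <- p) (pi (tgt e) - pi (src e)) = pi d - pi o.
Proof.
elim: p o => [|e p IHp] o /=; first by move/eqP->; rewrite big_nil subrr.
by case/andP=> /eqP <- /IHp walk_p; rewrite big_cons walk_p; ring.
Qed.

Definition ancestors (v : V) : {set V} :=
  [set u | `[< exists p, p != [::] /\ is_walk u p v >]].

Lemma card_ancestors_lt e : acyclic src tgt ->
  (#|ancestors (src e)| < #|ancestors (tgt e)|)%N.
Proof.
move=> acyc.
have src_notin : src e \notin ancestors (src e).
  by rewrite inE; apply/asboolP => -[p [/eqP p_neq0 /acyc]].
have sub : src e |: ancestors (src e) \subset ancestors (tgt e).
  apply/subsetP => u; rewrite !inE => /orP[/eqP->|].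
    by apply/asboolP; exists [:: e]; rewrite /= !eqxx.
  move/asboolP => [p [p_neq0 walk_p]]; apply/asboolP; exists (p ++ [:: e]); split.
    by case: p p_neq0 {walk_p}.
  by apply: is_walk_cat walk_p _; rewrite /= !eqxx.
by have := subset_leq_card sub; rewrite cardsU1 src_notin.
Qed.

Lemma acyclic_potential (w : E -> R) : acyclic src tgt ->
  exists pi : V -> R, forall e, w e <= pi (tgt e) - pi (src e).
Proof.
move=> acyc; pose M := \sum_(e : E) `|w e|.
exists (fun v => M * #|ancestors v|%:R) => e.
have w_le_M : w e <= M.
  rewrite /M (bigD1 e) //=; apply: le_trans (ler_norm _) _.
  by rewrite lerDl sumr_ge0.
have M_ge0 : 0 <= M by rewrite sumr_ge0.
have := card_ancestors_lt e acyc; rewrite -(ler_nat R) -addn1 natrD => card_lt.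
nra.
Qed.

Lemma mem_paths i p : p \in paths i -> uniq p /\ is_walk (orig i) p (dest i).
Proof.
rewrite mem_undup mem_filter => /andP[/andP[walk_p uniq_p] _]; split => //.
by case/andP: uniq_p => _ /map_uniq.
Qed.

Lemma big_paths_load (h : flow R E I) (F : E -> R) :
  \sum_(i : I) \sum_(p <- paths i) h i p * \sum_(e <- p) F e =
  \sum_(e : E) load h e * F e.
Proof.
under [RHS]eq_bigr => e _ do rewrite mulr_suml.
rewrite [RHS]exchange_big; apply: eq_bigr => i _.
under [RHS]eq_bigr => e _ do rewrite mulr_suml.
rewrite [RHS]exchange_big /=; apply: eq_big_seq => p /mem_paths [uniq_p _].
under [RHS]eq_bigr => e _ do rewrite -mulrA.
rewrite -mulr_sumr big_uniq // big_mkcond; congr (_ * _); apply: eq_bigr => e _.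
by case: (e \in p); rewrite ?mul1r ?mul0r.
Qed.

Lemma total_cost_load (c : E -> R -> R) (h : flow R E I) :
  total_cost c h = \sum_(e : E) load h e * c e (load h e).
Proof. exact: big_paths_load. Qed.

Lemma load_ge0 (mu : I -> R) (h : flow R E I) e : feasible mu h -> 0 <= load h e.
Proof.
case=> h_ge0 _; apply: sumr_ge0 => i _; rewrite big_seq; apply: sumr_ge0 => p p_in.
by rewrite mulr_ge0 ?h_ge0.
Qed.

Lemma wardrop_potential_shift (c c' : E -> R -> R) (k : R) (pi : V -> R)
    (mu : I -> R) (f : flow R E I) :
  0 < k -> (forall e x, c' e x = k * c e x + (pi (tgt e) - pi (src e))) ->
  wardrop c' mu f -> wardrop c mu f.
Proof.
move=> k_gt0 c'E [feas_f eq_f]; split => // i p q p_in q_in f_gt0.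
have path_cost' r : r \in paths i ->
    path_cost c' f r = k * path_cost c f r + (pi (dest i) - pi (orig i)).
  case/mem_paths => _ /(big_walk_telescope pi) <-.
  by rewrite /Defs.path_cost mulr_sumr -big_split; apply: eq_bigr => e _; rewrite c'E.
by have := eq_f i p q p_in q_in f_gt0; rewrite !path_cost' // lerD2r ler_pM2l.
Qed.

Section MarginalCost.
Variables (c mc : E -> R -> R).
Hypothesis mc_tangent : forall e x y, 0 <= x -> 0 <= y ->
  x * c e x + (y - x) * mc e x <= y * c e y.

Lemma wardrop_marginal_optimum (mu : I -> R) (f : flow R E I) :
  wardrop mc mu f -> system_optimum c mu f.
Proof.
case=> feas_f eq_f; split => // g feas_g.
have first_order : 0 <= \sum_(e : E) (load g e - load f e) * mc e (load f e).
  under eq_bigr => e _ do rewrite mulrBl.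
  rewrite sumrB -!big_paths_load subr_ge0; apply: ler_sum => i _.
  case: feas_f feas_g => [f_ge0 f_sum] [g_ge0 g_sum].
  apply: (sum_le_of_min_support (cost := path_cost mc f) _ _ (f_sum i) (g_sum i));
    [exact: f_ge0 | exact: g_ge0 | exact: eq_f].
rewrite !total_cost_load -subr_ge0 -sumrB; apply: le_trans first_order _.
apply: ler_sum => e _; rewrite lerBrDr addrC.
by apply: mc_tangent; [exact: load_ge0 feas_f | exact: load_ge0 feas_g].
Qed.

End MarginalCost.

End RoutingGame.

Theorem theorem6 (R : realType) (V E I : finType)
  (src tgt : E -> V) (orig dest : I -> V)
  (t a : E -> R) (beta : R) :
  0 <= beta -> (forall e, 0 <= t e) -> (forall e, 0 <= a e) ->
  acyclic src tgt ->
  exists tau : E -> R, (forall e, 0 <= tau e) /\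
    is_DIOT src tgt orig dest (bpr t a beta) tau.
Proof.
move=> beta_ge0 t_ge0 a_ge0 acyc.
have K_gt0 : 0 < 1 + beta by lra.
pose mc e x := t e + (1 + beta) * a e * x `^ beta.
pose w e := t e - t e / (1 + beta).
have [pi w_le_pi] := acyclic_potential w acyc.
exists (fun e => pi (tgt e) - pi (src e) - w e); split.
  by move=> e; rewrite subr_ge0.
move=> mu _ f eq_f.
apply: (wardrop_marginal_optimum (mc := mc)).
  by move=> e x y; apply: bpr_tangent.
have invK_gt0 : 0 < (1 + beta)^-1 by rewrite invr_gt0.
apply: (wardrop_potential_shift (pi := pi) invK_gt0 _ eq_f) => e x.
by rewrite /tolled /bpr /mc /w; field; rewrite gt_eqF.
Qed.
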